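(* Let $n\ge 2$, $\sigma\ge 0$, let $z\in\mathbb{C}^n$ satisfy $|z_1|=\cdots=|z_n|=1$, let $W\in\mathbb{C}^{n\times n}$ be $z$-discordant, and let $C=zz^*+\sigma W$. If $x\in\mathbb{C}^n$ satisfies $\|x\|_2^2=n$ and $z^*Cz\le x^*Cx$ (in particular, if $x$ is a global optimizer of $\max x^*Cx$ subject to $|x_1|=\cdots=|x_n|=1$), then \[\min_{\theta\in\mathbb{R}}\|xe^{i\theta}-z\|_2^2=2(n-|z^*x|)\le 144\sigma^2.\]
   Context: For $z\in\mathbb{C}^n$ with unit-modulus entries, a matrix $W\in\mathbb{C}^{n\times n}$ is called $z$-discordant if it is Hermitian and satisfies both $\|W\|_{\mathrm{op}}\le 3\sqrt{n}$ (operator norm = largest singular value) and $\|Wz\|_\infty\le 3\sqrt{n\log n}$, with $\log$ the natural logarithm. *)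

From HB Require Import structures.
From mathcomp Require Import all_boot all_order all_algebra.
From mathcomp Require Import complex.
Notation normc := ComplexField.Normc.normc.
From mathcomp Require Import all_classical all_reals.
From mathcomp Require Import exp trigo.
Set Implicit Arguments. Unset Strict Implicit. Unset Printing Implicit Defensive.
Import Order.TTheory GRing.Theory Num.Theory.
Local Open Scope ring_scope.
Local Open Scope classical_set_scope.

Section Defs.
Variable R : realType.

Definition ctrmx m n (A : 'M[R[i]]_(m, n)) : 'M[R[i]]_(n, m) :=
  (map_mx Num.conj A)^T.

Definition hermitian n (W : 'M[R[i]]_n) : Prop := ctrmx W = W.

Definition vnorm2 n (v : 'cV[R[i]]_n) : R :=
  Num.sqrt (\sum_(i < n) (normc (v i 0)) ^+ 2).

Definition vnorminf n (v : 'cV[R[i]]_n) : R :=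
  \big[Num.max/0]_(i < n) normc (v i 0).

Definition opnorm n (W : 'M[R[i]]_n) : R :=
  sup [set vnorm2 (W *m v) | v in [set v : 'cV[R[i]]_n | vnorm2 v = 1]].

Definition unit_modulus n (z : 'cV[R[i]]_n) : Prop :=
  forall i, normc (z i 0) = 1.

Definition discordant n (z : 'cV[R[i]]_n) (W : 'M[R[i]]_n) : Prop :=
  [/\ hermitian W,
      opnorm W <= 3 * Num.sqrt (n%:R) &
      vnorminf (W *m z) <= 3 * Num.sqrt (n%:R * ln (n%:R))].

Definition qform n (C : 'M[R[i]]_n) (x : 'cV[R[i]]_n) : R[i] :=
  (ctrmx x *m C *m x) 0 0.

Definition cdot n (z x : 'cV[R[i]]_n) : R[i] := (ctrmx z *m x) 0 0.

Definition expi (t : R) : R[i] := (cos t +i* sin t)%C.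

End Defs.

From Pilot Require Import Defs.
From HB Require Import structures.
From mathcomp Require Import all_boot all_order all_algebra.
From mathcomp Require Import complex.
From mathcomp Require Import all_classical all_reals.
From mathcomp Require Import exp trigo.
From mathcomp Require Import ring lra.
Import Order.TTheory GRing.Theory Num.Theory.
Set Implicit Arguments. Unset Strict Implicit. Unset Printing Implicit Defensive.
Local Open Scope ring_scope.

(* Rotate x to y = e^{it} x so that z^* y = |z^* x| =: p, and let
   N = n = ||z||^2 = ||y||^2.  Expanding both quadratic forms, the optimality
   hypothesis reads N^2 - p^2 <= sigma Re((y - z)^* W (y + z)), since W is
   Hermitian.  By AM-GM and the operator-norm bound, 2 Re((y - z)^* W (y + z))
   <= t ||y - z||^2 + 9N ||y + z||^2 / t for every t > 0, where
   ||y -+ z||^2 = 2N -+ 2p; the choice t = (N + p) / (2 sigma) gives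
   N^2 - p^2 <= 36 N sigma^2, hence N - p <= 36 sigma^2. *)

Local Notation Re := complex.Re.
Local Notation Im := complex.Im.

Section ComplexScalars.
Variable R : rcfType.
Implicit Types (a b : R[i]) (k : R).

Lemma conjcE a : Num.conj a = a^*%C.
Proof.
have [->|a0] := eqVneq a 0; first by rewrite rmorph0 conjc0.
by apply: (mulfI a0); rewrite -normCK sqr_normc.
Qed.

Lemma ReM a b : Re (a * b) = Re a * Re b - Im a * Im b.
Proof. by case: a => ? ?; case: b. Qed.

Lemma Re_conj a : Re (Num.conj a) = Re a.
Proof. by rewrite conjcE; case: a. Qed.

Lemma Re_conjM a b : Re (Num.conj a * b) = Re a * Re b + Im a * Im b.
Proof. by rewrite conjcE; case: a => ? ?; case: b => ? ? /=; lra. Qed.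

Lemma Re_realM k a : Re (k%:C%C * a) = k * Re a.
Proof. by case: a => ? ? /=; lra. Qed.

Lemma normc_ge0 a : 0 <= normc a.
Proof. by case: a => ? ?; rewrite sqrtr_ge0. Qed.

Lemma sqr_normcE a : normc a ^+ 2 = Re a ^+ 2 + Im a ^+ 2.
Proof. by case: a => ? ? /=; rewrite sqr_sqrtr // addr_ge0 ?sqr_ge0. Qed.

Lemma normc_real k : normc (k%:C%C : R[i]) = `|k|.
Proof. by rewrite /= expr0n /= addr0 sqrtr_sqr. Qed.

Lemma real_normc a : (normc a)%:C%C = `|a|.
Proof. by case: a => ? ?; simpc. Qed.

Lemma normc_sum (I : finType) (F : I -> R[i]) :
  normc (\sum_i F i) <= \sum_i normc (F i).
Proof.
elim/big_rec2: _ => [|i y1 y2 _ h]; first by rewrite ComplexField.Normc.normc0.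
exact: le_trans (le_normcD _ _) (lerD _ h).
Qed.

Lemma Re_le_normc a : Re a <= normc a.
Proof.
case: a => a1 a2 /=; apply: le_trans (ler_norm a1) _.
by rewrite -sqrtr_sqr ler_wsqrtr // lerDl sqr_ge0.
Qed.

End ComplexScalars.

Section Phase.
Variable R : realType.

Lemma normc_expi (t : R) : normc (expi t) = 1.
Proof. by rewrite /= cos2Dsin2 sqrtr1. Qed.

(* The angle is +- acos (Re S / |S|), with the sign of - Im S. *)
Lemma exists_expi_Re_normc (S : R[i]) : exists t : R, Re (expi t * S) = normc S.
Proof.
have [p0|pn0] := eqVneq (normc S) 0.
  by exists 0; rewrite (ComplexField.Normc.eq0_normc p0) mulr0
    ComplexField.Normc.normc0.
set p := normc S in pn0 *.
have p_gt0 : 0 < p by rewrite lt_def pn0 normc_ge0.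
have hp2 : p ^+ 2 = Re S ^+ 2 + Im S ^+ 2 by rewrite sqr_normcE.
set a := Re S in hp2 *; set b := Im S in hp2 *.
have hab : -1 <= a / p <= 1.
  by rewrite ler_pdivlMr // ler_pdivrMr // mulN1r mul1r; apply/andP; split; nra.
have [t [ct st]] : exists t, cos t = a / p /\ sin t = - b / p.
  have ca := acosK (x := a / p); rewrite in_itv /= hab in ca.
  have sa := sin_acos hab.
  have cos2 : 1 - (a / p) ^+ 2 = (b / p) ^+ 2.
    rewrite !expr_div_n; apply/eqP; rewrite subr_eq -mulrDl addrC -hp2.
    by rewrite mulfV // expf_neq0.
  rewrite cos2 sqrtr_sqr in sa; have [b_le0|b_gt0] := leP b 0.
    exists (acos (a / p)); split; first exact: ca.
    by rewrite sa ler0_norm ?mulNr // pmulr_lle0 ?invr_gt0.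
  exists (- acos (a / p)); split; first by rewrite cosN ca.
  by rewrite sinN sa gtr0_norm ?mulNr // divr_gt0.
exists t; rewrite ReM /= ct st -/a -/b.
have -> : a / p * a - - b / p * b = p ^+ 2 / p by rewrite hp2; field.
by rewrite expr2 mulfK.
Qed.

End Phase.

Section ConjugateTranspose.
Variable R : realType.

Lemma ctrmxM m n p (A : 'M[R[i]]_(m, n)) (B : 'M[R[i]]_(n, p)) :
  ctrmx (A *m B) = ctrmx B *m ctrmx A.
Proof. by rewrite /ctrmx map_mxM trmx_mul. Qed.

Lemma ctrmxK m n (A : 'M[R[i]]_(m, n)) : ctrmx (ctrmx A) = A.
Proof. by apply/matrixP => i j; rewrite !mxE conjCK. Qed.

Lemma ctrmx11 (A : 'M[R[i]]_1) : ctrmx A 0 0 = Num.conj (A 0 0).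
Proof. by rewrite !mxE. Qed.

End ConjugateTranspose.

Section ComplexVectors.
Variables (R : realType) (n : nat).
Local Notation vec := 'cV[R[i]]_n.
Implicit Types (a b c u v : vec) (W : 'M[R[i]]_n).

Definition sqnorm v : R := \sum_(i < n) normc (v i 0) ^+ 2.

Lemma sqnorm_ge0 v : 0 <= sqnorm v.
Proof. by apply: sumr_ge0 => i _; rewrite sqr_ge0. Qed.

Lemma vnorm2_sqr v : vnorm2 v ^+ 2 = sqnorm v.
Proof. by rewrite sqr_sqrtr // sqnorm_ge0. Qed.

Lemma sqnorm_ReIm v : sqnorm v = \sum_i (Re (v i 0) ^+ 2 + Im (v i 0) ^+ 2).
Proof. by apply: eq_bigr => i _; rewrite sqr_normcE. Qed.

Lemma sqnormZ (k : R[i]) v : sqnorm (k *: v) = normc k ^+ 2 * sqnorm v.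
Proof.
rewrite /sqnorm mulr_sumr; apply: eq_bigr => i _.
by rewrite mxE ComplexField.Normc.normcM exprMn.
Qed.

Lemma sqnorm_eq0 v : sqnorm v = 0 -> v = 0.
Proof.
move=> /psumr_eq0P v0; apply/matrixP => i j; rewrite (ord1 j) mxE.
apply: ComplexField.Normc.eq0_normc; apply/eqP.
by rewrite -sqrf_eq0 v0 // => k _; rewrite sqr_ge0.
Qed.

Lemma cdotE a b : cdot a b = \sum_i Num.conj (a i 0) * b i 0.
Proof. by rewrite /cdot mxE; apply: eq_bigr => i _; rewrite !mxE. Qed.

Lemma Re_cdot a b :
  Re (cdot a b) = \sum_i (Re (a i 0) * Re (b i 0) + Im (a i 0) * Im (b i 0)).
Proof. by rewrite cdotE raddf_sum; apply: eq_bigr => i _ /=; rewrite Re_conjM. Qed.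

Lemma cdot_self v : cdot v v = (sqnorm v)%:C%C.
Proof.
rewrite cdotE rmorph_sum; apply: eq_bigr => i _.
by rewrite -normCKC -real_normc rmorphXn.
Qed.

Lemma cdotC a b : cdot b a = Num.conj (cdot a b).
Proof. by rewrite /cdot -ctrmx11 ctrmxM ctrmxK. Qed.

Lemma cdotDr a b c : cdot a (b + c) = cdot a b + cdot a c.
Proof. by rewrite !cdotE -big_split; apply: eq_bigr => i _; rewrite mxE mulrDr. Qed.

Lemma cdotBl a b c : cdot (a - b) c = cdot a c - cdot b c.
Proof.
by rewrite !cdotE -sumrB; apply: eq_bigr => i _; rewrite !mxE rmorphB mulrBl.
Qed.

Lemma cdotZr (k : R[i]) a b : cdot a (k *: b) = k * cdot a b.
Proof. by rewrite !cdotE mulr_sumr; apply: eq_bigr => i _; rewrite mxE mulrCA. Qed.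

Lemma cdotZl (k : R[i]) a b : cdot (k *: a) b = Num.conj k * cdot a b.
Proof.
by rewrite !cdotE mulr_sumr; apply: eq_bigr => i _; rewrite mxE rmorphM mulrA.
Qed.

Lemma cdot_hermitian W a b :
  Defs.hermitian W -> cdot a (W *m b) = Num.conj (cdot b (W *m a)).
Proof. by move=> hW; rewrite /cdot -ctrmx11 !ctrmxM ctrmxK hW mulmxA. Qed.

Lemma sqnormD a b : sqnorm (a + b) = sqnorm a + sqnorm b + 2 * Re (cdot b a).
Proof.
rewrite !sqnorm_ReIm Re_cdot mulr_sumr -!big_split /=; apply: eq_bigr => i _.
by rewrite !mxE !raddfD /=; ring.
Qed.

Lemma sqnormB a b : sqnorm (a - b) = sqnorm a + sqnorm b - 2 * Re (cdot b a).
Proof.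
rewrite !sqnorm_ReIm Re_cdot mulr_sumr -big_split /= -sumrB; apply: eq_bigr => i _.
by rewrite !mxE !raddfB /=; ring.
Qed.

Lemma Re_cdot_le_AMGM a b (t : R) : 0 < t ->
  2 * Re (cdot a b) <= t * sqnorm a + sqnorm b / t.
Proof.
move=> t_gt0; rewrite Re_cdot !sqnorm_ReIm !mulr_sumr mulr_suml -big_split /=.
apply: ler_sum => i _; rewrite -subr_ge0.
set x1 := Re (a i 0); set x2 := Im (a i 0); set y1 := Re (b i 0); set y2 := Im (b i 0).
have -> : t * (x1 ^+ 2 + x2 ^+ 2) + (y1 ^+ 2 + y2 ^+ 2) / t - 2 * (x1 * y1 + x2 * y2)
   = ((t * x1 - y1) ^+ 2 + (t * x2 - y2) ^+ 2) / t by field; rewrite gt_eqF.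
by rewrite divr_ge0 ?addr_ge0 ?sqr_ge0 ?ltW.
Qed.

Lemma opnorm_ubound W :
  has_ubound [set vnorm2 (W *m v) | v in [set v : vec | vnorm2 v = 1]]%classic.
Proof.
exists (Num.sqrt (\sum_i (\sum_j normc (W i j)) ^+ 2)) => _ [v /= v1 <-].
have {}v1 : sqnorm v = 1 by rewrite -vnorm2_sqr v1 expr1n.
apply: ler_wsqrtr; apply: ler_sum => i _.
have v_le1 j : normc (v j 0) <= 1.
  have : normc (v j 0) ^+ 2 <= 1.
    rewrite -v1 /sqnorm (bigD1 j) //= lerDl.
    by apply: sumr_ge0 => k _; rewrite sqr_ge0.
  by have := normc_ge0 (v j 0); nra.
have Wv_le : normc ((W *m v) i 0) <= \sum_j normc (W i j).
  rewrite mxE; apply: le_trans (normc_sum _) _; apply: ler_sum => j _.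
  rewrite ComplexField.Normc.normcM.
  by have := normc_ge0 (W i j); have := v_le1 j; have := normc_ge0 (v j 0); nra.
by have := normc_ge0 ((W *m v) i 0); nra.
Qed.

Lemma sqnorm_mulmx_le W (L : R) v :
  opnorm W <= L -> sqnorm (W *m v) <= L ^+ 2 * sqnorm v.
Proof.
move=> WL; have [v0|vn0] := eqVneq (sqnorm v) 0.
  rewrite v0 mulr0 (sqnorm_eq0 v0) mulmx0 /sqnorm big1 // => i _.
  by rewrite mxE ComplexField.Normc.normc0 expr0n.
have s_gt0 : 0 < vnorm2 v by rewrite sqrtr_gt0 lt_def vn0 sqnorm_ge0.
have sqnormZ_inv u : sqnorm (((vnorm2 v)^-1)%:C%C *: u) = sqnorm u / sqnorm v.
  by rewrite sqnormZ normc_real ger0_norm ?invr_ge0 ?ltW // exprVn vnorm2_sqr mulrC.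
set w := ((vnorm2 v)^-1)%:C%C *: v.
have w1 : vnorm2 w = 1 by rewrite /vnorm2 -/(sqnorm _) sqnormZ_inv divff ?sqrtr1.
have Ww_le : vnorm2 (W *m w) <= L.
  apply: le_trans WL; apply: sup_upper_bound; last by exists w.
  by split; [exists (vnorm2 (W *m w)); exists w | exact: opnorm_ubound].
have : sqnorm (W *m w) <= L ^+ 2.
  by rewrite -vnorm2_sqr; have : 0 <= vnorm2 (W *m w) := sqrtr_ge0 _; nra.
by rewrite /w -scalemxAr sqnormZ_inv ler_pdivrMr ?lt_def ?vn0 ?sqnorm_ge0.
Qed.

Lemma sqnorm_expiZB (t : R) u v :
  sqnorm (expi t *: u - v) = sqnorm u + sqnorm v - 2 * Re (expi t * cdot v u).
Proof. by rewrite sqnormB sqnormZ normc_expi expr1n mul1r cdotZr. Qed.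

Lemma sqnorm_expiZB_ge (t : R) u v :
  sqnorm u + sqnorm v - 2 * normc (cdot v u) <= sqnorm (expi t *: u - v).
Proof.
rewrite sqnorm_expiZB lerD2l lerN2 ler_pM2l // (le_trans (Re_le_normc _)) //.
by rewrite ComplexField.Normc.normcM normc_expi mul1r.
Qed.

Lemma mulmx_rank1 c v : c *m ctrmx c *m v = cdot c v *: c.
Proof.
rewrite -mulmxA; apply/matrixP => i j.
by rewrite mxE big_ord1 (ord1 j) [in RHS]mxE mulrC.
Qed.

Lemma Re_qform_rank1 (s : R) W c v :
  Re (qform (c *m ctrmx c + s%:C%C *: W) v) =
  normc (cdot c v) ^+ 2 + s * Re (cdot v (W *m v)).
Proof.
rewrite /qform -mulmxA -/(cdot v _) mulmxDl mulmx_rank1 -scalemxAl cdotDr !cdotZr.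
by rewrite (cdotC c v) -normCK -real_normc -rmorphXn raddfD /= Re_realM.
Qed.

Lemma cdot_unitZ W (u : R[i]) v :
  normc u = 1 -> cdot (u *: v) (W *m (u *: v)) = cdot v (W *m v).
Proof.
move=> u1; rewrite -scalemxAr cdotZl cdotZr mulrA -normCKC -real_normc u1.
by rewrite expr1n mul1r.
Qed.

Lemma Re_cdot_hermitianBD W a b : Defs.hermitian W ->
  Re (cdot (a - b) (W *m (a + b))) = Re (cdot a (W *m a)) - Re (cdot b (W *m b)).
Proof.
move=> hW; rewrite mulmxDr cdotDr !cdotBl (cdot_hermitian a b hW).
by rewrite raddfD /= !raddfB /= Re_conj; lra.
Qed.

Lemma qform_rank1_gap (s : R) W c v (u : R[i]) :
  Defs.hermitian W -> normc u = 1 ->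
  qform (c *m ctrmx c + s%:C%C *: W) c <= qform (c *m ctrmx c + s%:C%C *: W) v ->
  sqnorm c ^+ 2 - normc (cdot c v) ^+ 2
    <= s * Re (cdot (u *: v - c) (W *m (u *: v + c))).
Proof.
move=> hW u1; rewrite lecE => /andP[_]; rewrite !Re_qform_rank1 cdot_self.
rewrite normc_real ger0_norm ?sqnorm_ge0 // Re_cdot_hermitianBD // cdot_unitZ //.
by rewrite mulrBr; lra.
Qed.

End ComplexVectors.

Lemma gap_le_of_AMGM (R : realFieldType) (N p s r : R) :
  0 < N -> 0 <= p -> 0 <= s -> N ^+ 2 - p ^+ 2 <= s * r ->
  (forall t, 0 < t -> 2 * r <= t * (2 * N - 2 * p) + 9 * N * (2 * N + 2 * p) / t) ->
  N - p <= 36 * s ^+ 2.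
Proof.
move=> N_gt0 p_ge0 s_ge0 gap AMGM.
have [|p_lt_N] := leP (N - p) 0; first by have := sqr_ge0 s; lra.
have [s0|s_neq0] := eqVneq s 0; first by move: gap; rewrite s0 mul0r; nra.
have s_gt0 : 0 < s by rewrite lt_def s_neq0.
(* the value of t balancing the two terms of the AM-GM bound *)
set t := (N + p) / (2 * s).
have t_gt0 : 0 < t by rewrite divr_gt0 //; lra.
have balance : s * (t * (2 * N - 2 * p) + 9 * N * (2 * N + 2 * p) / t)
    = N ^+ 2 - p ^+ 2 + 36 * N * s ^+ 2.
  by rewrite /t; field; rewrite s_neq0 gt_eqF //; lra.
have := ler_wpM2l s_ge0 (AMGM t t_gt0); rewrite balance => bound.
by rewrite -(ler_pM2l N_gt0); nra.
Qed.

Unset Implicit Arguments.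
Theorem lemma5 (R : realType) (n : nat) (sigma : R)
    (z : 'cV[R[i]]_n) (W : 'M[R[i]]_n) (x : 'cV[R[i]]_n) :
  (2 <= n)%N -> 0 <= sigma ->
  unit_modulus z -> discordant z W ->
  let C := z *m ctrmx z + (sigma%:C)%C *: W in
  vnorm2 x ^+ 2 = n%:R ->
  qform C z <= qform C x ->
  let d := 2 * (n%:R - normc (cdot z x)) in
  [/\ (forall t : R, d <= vnorm2 (expi t *: x - z) ^+ 2),
      (exists t : R, vnorm2 (expi t *: x - z) ^+ 2 = d) &
      d <= 144 * sigma ^+ 2].
Proof.
move=> n_ge2 sigma_ge0 z_unit [W_herm W_op _] C.
rewrite vnorm2_sqr => x_sqnorm gain d.
set N : R := n%:R; set p := normc (cdot z x).
have N_gt0 : 0 < N by rewrite ltr0n (leq_trans _ n_ge2).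
have z_sqnorm : sqnorm z = N.
  rewrite /sqnorm (eq_bigr (fun=> 1)) ?sumr_const ?card_ord // => i _.
  by rewrite z_unit expr1n.
have [t0 align] := exists_expi_Re_normc (cdot z x).
split.
- move=> t; rewrite vnorm2_sqr /d.
  by have := sqnorm_expiZB_ge t x z; rewrite x_sqnorm z_sqnorm; lra.
- by exists t0; rewrite vnorm2_sqr sqnorm_expiZB x_sqnorm z_sqnorm align /d; lra.
set y := expi t0 *: x.
have y_sqnorm : sqnorm y = N by rewrite sqnormZ normc_expi expr1n mul1r.
have Re_zy : Re (cdot z y) = p by rewrite cdotZr.
have yz_minus : sqnorm (y - z) = 2 * N - 2 * p.
  by rewrite sqnormB y_sqnorm z_sqnorm Re_zy; lra.
have yz_plus : sqnorm (y + z) = 2 * N + 2 * p.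
  by rewrite sqnormD y_sqnorm z_sqnorm Re_zy; lra.
have gap := qform_rank1_gap W_herm (normc_expi t0) gain.
rewrite z_sqnorm in gap.
have amgm t : 0 < t -> 2 * Re (cdot (y - z) (W *m (y + z)))
    <= t * (2 * N - 2 * p) + 9 * N * (2 * N + 2 * p) / t.
  move=> t_gt0; apply: le_trans (Re_cdot_le_AMGM _ _ t_gt0) _.
  rewrite yz_minus lerD2l ler_wpM2r ?invr_ge0 ?(ltW t_gt0) // -yz_plus.
  by have := sqnorm_mulmx_le (y + z) W_op; rewrite exprMn sqr_sqrtr ?ler0n //; lra.
have := gap_le_of_AMGM N_gt0 (normc_ge0 _) sigma_ge0 gap amgm.
by rewrite /d; have := sqr_ge0 sigma; lra.
Qed.
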